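(* Let $A>0$, $\alpha>0$, $k\ge2$, and define \[ \Lambda^{(k,1)}(A,\alpha):=\inf_{a\ge1}\Big[\lambda_k(I_{A^{1/2}a},\alpha)+\lambda_1(I_{A^{1/2}/a},\alpha)\Big]. \] Then \[ \frac{3\pi^2\alpha^{2/3}}{(\pi^2+2A^{1/2}\alpha)^{2/3}A^{2/3}}(k-2)^{2/3}\le\Lambda^{(k,1)}(A,\alpha), \] and, provided $\alpha\le\pi^2A^{-1/2}k^2$, \[ \Lambda^{(k,1)}(A,\alpha)\le3\Big(\frac{\pi\alpha}{A}\Big)^{2/3}k^{2/3}. \] Moreover the infimum is attained, and (for fixed $A,\alpha$) there are constants $0<c\le c'$ such that for all sufficiently large $k$ it is attained at some $a_k\ge1$ with $ck^{2/3}\le a_k\le c'k^{2/3}$. Finally, \[ \lim_{k\to\infty}\frac{\Lambda^{(k,1)}(A,\alpha)}{k^{2/3}}=3\Big(\frac{\pi\alpha}{A}\Big)^{2/3}. \]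
   Context: For an interval $I_b\subset\mathbb{R}$ of length $b>0$ and $\alpha>0$, $\lambda_1(I_b,\alpha)<\lambda_2(I_b,\alpha)<\cdots$ denote the eigenvalues of the Robin problem $-u''=\lambda u$ on $I_b$, $\partial_\nu u+\alpha u=0$ at both endpoints ($\partial_\nu$ the outward derivative). *)

From Stdlib Require Import Reals Lra List ClassicalEpsilon.
From Coquelicot Require Import Coquelicot.
Open Scope R_scope.

(* Real power x^y for x > 0, extended by 0 for x <= 0 (so 0^y = 0 for y > 0). *)
Definition rpow (x y : R) : R :=
  if Rlt_dec 0 x then Rpower x y else 0.

(* lam is a Robin eigenvalue of -u'' = lam u on the interval I_b = (0,b)
   with Robin parameter alpha: there is a nontrivial solution u (with
   derivative u') of the ODE on [0,b] satisfying the Robin conditions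
   d_nu u + alpha u = 0 at both endpoints (outward derivative:
   -u'(0) at 0 and u'(b) at b). *)
Definition robin_eigenvalue (b alpha lam : R) : Prop :=
  exists u u' : R -> R,
    (forall x, 0 <= x <= b -> is_derive u x (u' x) /\ is_derive u' x (- lam * u x)) /\
    (exists x, 0 <= x <= b /\ u x <> 0) /\
    - u' 0 + alpha * u 0 = 0 /\
    u' b + alpha * u b = 0.

(* lam is the k-th eigenvalue (k >= 1) in increasing order: it is an
   eigenvalue and exactly k-1 eigenvalues are strictly smaller. *)
Definition is_kth_robin_eigenvalue (b alpha : R) (k : nat) (lam : R) : Prop :=
  robin_eigenvalue b alpha lam /\
  exists l : list R, NoDup l /\ length l = (k - 1)%nat /\
    forall mu, In mu l <-> (robin_eigenvalue b alpha mu /\ mu < lam).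

Definition robin_ev (b alpha : R) (k : nat) : R :=
  epsilon (inhabits 0) (is_kth_robin_eigenvalue b alpha k).

Definition Lam_fun (A alpha : R) (k : nat) (a : R) : R :=
  robin_ev (sqrt A * a) alpha k + robin_ev (sqrt A / a) alpha 1.

Definition LambdaK1 (A alpha : R) (k : nat) : Rbar :=
  Glb_Rbar (fun x => exists a, 1 <= a /\ x = Lam_fun A alpha k a).

(* The Robin eigenvalues of [I_b] are [mu_j^2], where [mu_j] is the unique root
   of [mu b + 2 atan (mu / alpha) = j PI]; hence [((j-1) PI / b)^2 < lambda_j <
   (j PI / b)^2]. For [j = 1] the equation reads [tan (mu b / 2) = alpha / mu],
   and [atan z <= z] with the Becker-Stark inequality give
   [2 PI^2 alpha / (b (PI^2 + 2 alpha b)) <= lambda_1 <= 2 alpha / b].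
   So [lambda_k(I_(sqrt A a)) + lambda_1(I_(sqrt A / a))] lies between
   [(k-1)^2 PI^2 / (A a^2) + c a] and [(k PI)^2 / (A a^2) + 2 alpha a / sqrt A],
   and AM-GM for [P / a^2 + Q a] yields both bounds, at the scale [a ~ k^(2/3)].
   The sum is continuous in [a] and grows linearly, so the infimum is a minimum;
   any near-minimizer has [a ~ k^(2/3)], so [sqrt A / a -> 0], the rate [c]
   tends to [2 alpha / sqrt A] and the two bounds meet. *)

From Stdlib Require Import Reals Lra Lia Psatz List FinFun ClassicalEpsilon.
From Coquelicot Require Import Coquelicot.
Open Scope R_scope.

Lemma PI_approx : 3.1 < PI < 3.2.
Proof.
  destruct (PI_2_3_7_ineq 1) as [Hlo Hhi].
  unfold tg_alt, PI_2_3_7_tg, Ratan_seq in Hlo, Hhi; simpl in Hlo, Hhi; lra.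
Qed.

Lemma Rpower_pos (x y : R) : 0 < Rpower x y.
Proof. apply exp_pos. Qed.

Lemma rpow_Rpower (x y : R) : 0 < x -> rpow x y = Rpower x y.
Proof. intros Hx; unfold rpow; destruct (Rlt_dec 0 x); [reflexivity | lra]. Qed.

Lemma rpow_0_l (y : R) : rpow 0 y = 0.
Proof. unfold rpow; destruct (Rlt_dec 0 0); [lra | reflexivity]. Qed.

Lemma Rpower_one_third_cube (x : R) : 0 < x -> Rpower x (1/3) ^ 3 = x.
Proof.
  intros Hx. rewrite <- Rpower_pow, Rpower_mult by apply Rpower_pos.
  replace (1/3 * INR 3) with 1 by (simpl; field). apply Rpower_1; exact Hx.
Qed.

Lemma Rpower_two_thirds_cube (x : R) : 0 < x -> Rpower x (2/3) ^ 3 = x ^ 2.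
Proof.
  intros Hx. rewrite <- Rpower_pow, Rpower_mult by apply Rpower_pos.
  replace (2/3 * INR 3) with (INR 2) by (simpl; field). apply Rpower_pow; exact Hx.
Qed.

Lemma pow3_lt_compat (x y : R) : 0 <= x < y -> x ^ 3 < y ^ 3.
Proof.
  intros Hxy.
  assert (Hfactor : y ^ 3 - x ^ 3 = (y - x) * (x * x + x * y + y * y)) by ring.
  assert (0 < (y - x) * (x * x + x * y + y * y)) by (apply Rmult_lt_0_compat; nra).
  lra.
Qed.

Lemma pow3_le_inv (x y : R) : 0 <= y -> x ^ 3 <= y ^ 3 -> x <= y.
Proof.
  intros Hy H. destruct (Rle_lt_dec x y) as [Hxy | Hyx]; [exact Hxy | exfalso].
  assert (y ^ 3 < x ^ 3) by (apply pow3_lt_compat; lra). lra.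
Qed.

Lemma pow3_inj (x y : R) : 0 <= x -> 0 <= y -> x ^ 3 = y ^ 3 -> x = y.
Proof. intros Hx Hy H; apply Rle_antisym; apply pow3_le_inv; lra. Qed.

(* AM-GM for the three numbers [P/a^2], [Q a/2], [Q a/2]. *)
Lemma amgm_cubic (P Q a t : R) : 0 < Q -> 0 < a -> 0 <= t -> 4 * t ^ 3 <= P * Q ^ 2 ->
  3 * t <= P / a ^ 2 + Q * a.
Proof.
  intros HQ Ha Ht Hcube.
  assert (HP : 4 * t ^ 3 / Q ^ 2 / a ^ 2 <= P / a ^ 2).
  { apply Rmult_le_compat_r; [left; apply Rinv_0_lt_compat, pow_lt; lra |].
    apply Rle_div_l; [apply pow_lt; lra | lra]. }
  assert (Hsq : 0 <= (Q * a - 2 * t) ^ 2 * (Q * a + t) / (Q ^ 2 * a ^ 2)).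
  { apply Rdiv_le_0_compat.
    - apply Rmult_le_pos; [apply pow2_ge_0 | nra].
    - apply Rmult_lt_0_compat; apply pow_lt; lra. }
  assert (Hgap : 4 * t ^ 3 / Q ^ 2 / a ^ 2 + Q * a - 3 * t
                 = (Q * a - 2 * t) ^ 2 * (Q * a + t) / (Q ^ 2 * a ^ 2)) by (field; lra).
  lra.
Qed.

Lemma becker_stark_small (x : R) : 0 < x <= 1.3 ->
  (PI ^ 2 - 4 * x ^ 2) * sin x <= PI ^ 2 * x * cos x.
Proof.
  intros Hx. pose proof PI_approx.
  destruct (cos_bound x 1) as [Hcos _]; [lra | lra |].
  destruct (sin_bound x 0) as [_ Hsin]; [lra | lra |].
  unfold cos_approx, sin_approx, cos_term, sin_term in Hcos, Hsin; simpl in Hcos, Hsin.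
  field_simplify in Hcos. field_simplify in Hsin.
  set (z := x * x).
  assert (Hz : 0 < z <= 1.69) by (unfold z; nra).
  set (Q := PI ^ 2).
  assert (HQ : 9.61 <= Q <= 10.24) by (unfold Q; nra).
  (* Through the Taylor bounds, the claim reduces to a polynomial inequality in [z]. *)
  assert (Hpoly : 0 <= (4 - 2 * z / 3 + z ^ 2 / 30) - Q * (1/3 - z / 30 + z ^ 2 / 720)).
  { assert (0 <= (10.24 - Q) * (1/3 - z / 30 + z ^ 2 / 720)) by nra. nra. }
  assert (Htaylor : Q * x * (1 - x^2/2 + x^4/24 - x^6/720) - (Q - 4 * x ^ 2) * (x - x^3/6 + x^5/120)
                    = x * z * ((4 - 2 * z / 3 + z ^ 2 / 30) - Q * (1/3 - z / 30 + z ^ 2 / 720))).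
  { unfold z, Q. field. }
  assert (0 <= x * z * ((4 - 2 * z / 3 + z ^ 2 / 30) - Q * (1/3 - z / 30 + z ^ 2 / 720))).
  { apply Rmult_le_pos; [nra | exact Hpoly]. }
  assert (HQx : 0 <= Q - 4 * x ^ 2) by (unfold Q; nra).
  assert ((Q - 4 * x ^ 2) * sin x <= (Q - 4 * x ^ 2) * (x - x^3/6 + x^5/120)).
  { apply Rmult_le_compat_l; [exact HQx | lra]. }
  assert (Q * x * (1 - x^2/2 + x^4/24 - x^6/720) <= Q * x * cos x).
  { apply Rmult_le_compat_l; [unfold Q; nra | lra]. }
  fold Q; lra.
Qed.

Lemma becker_stark_large (x : R) : 1.3 < x < PI / 2 ->
  (PI ^ 2 - 4 * x ^ 2) * sin x <= PI ^ 2 * x * cos x.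
Proof.
  intros Hx. pose proof PI_approx.
  set (y := PI / 2 - x).
  assert (Hy : 0 < y <= 0.3) by (unfold y; lra).
  assert (Hcos : cos x = sin y) by (unfold y; rewrite sin_minus, sin_PI2, cos_PI2; ring).
  assert (Hsin : sin x = cos y) by (unfold y; rewrite cos_minus, sin_PI2, cos_PI2; ring).
  rewrite Hcos, Hsin.
  destruct (sin_bound y 0) as [Hsiny _]; [lra | lra |].
  unfold sin_approx, sin_term in Hsiny; simpl in Hsiny. field_simplify in Hsiny.
  assert (Hcosy : cos y <= 1) by apply COS_bound.
  replace x with (PI / 2 - y) by (unfold y; field).
  replace (PI ^ 2 - 4 * (PI / 2 - y) ^ 2) with (4 * y * (PI - y)) by field.
  assert (4 * y * (PI - y) * cos y <= 4 * y * (PI - y)).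
  { rewrite <- (Rmult_1_r (4 * y * (PI - y))) at 2. apply Rmult_le_compat_l; nra. }
  assert (Hcoef : 0 <= PI ^ 2 * (PI / 2 - y) * (1 - y * y / 6) - 4 * (PI - y)).
  { assert (Hfac : PI ^ 2 * (PI / 2 - y) * (1 - y * y / 6) - 4 * (PI - y)
                   = (PI / 2 - y) * (PI ^ 2 * (1 - y * y / 6) - 8) - 4 * y) by field.
    assert (9.61 <= PI ^ 2) by nra.
    assert (0.985 <= 1 - y * y / 6) by nra.
    assert (1.46 <= PI ^ 2 * (1 - y * y / 6) - 8) by nra.
    assert (1.25 * 1.46 <= (PI / 2 - y) * (PI ^ 2 * (1 - y * y / 6) - 8))
      by (apply Rmult_le_compat; lra).
    lra. }
  assert (4 * y * (PI - y) <= PI ^ 2 * (PI / 2 - y) * (y - y ^ 3 / 6)).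
  { assert (PI ^ 2 * (PI / 2 - y) * (y - y ^ 3 / 6) - 4 * y * (PI - y)
            = y * (PI ^ 2 * (PI / 2 - y) * (1 - y * y / 6) - 4 * (PI - y))) by field.
    assert (0 <= y * (PI ^ 2 * (PI / 2 - y) * (1 - y * y / 6) - 4 * (PI - y)))
      by (apply Rmult_le_pos; lra).
    lra. }
  assert (PI ^ 2 * (PI / 2 - y) * (y - y ^ 3 / 6) <= PI ^ 2 * (PI / 2 - y) * sin y).
  { apply Rmult_le_compat_l; [apply Rmult_le_pos; nra | lra]. }
  lra.
Qed.

(* Becker-Stark: [tan x <= pi^2 x / (pi^2 - 4 x^2)] on [(0, pi/2)]. *)
Lemma becker_stark (x : R) : 0 < x < PI / 2 ->
  (PI ^ 2 - 4 * x ^ 2) * sin x <= PI ^ 2 * x * cos x.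
Proof.
  intros Hx. destruct (Rle_lt_dec x 1.3).
  - apply becker_stark_small; lra.
  - apply becker_stark_large; lra.
Qed.

Lemma is_derive_continuity_pt (f : R -> R) (x l : R) : is_derive f x l -> continuity_pt f x.
Proof. intros H. apply derivable_continuous_pt. exists l. apply is_derive_Reals, H. Qed.

Lemma mvt_closed (f df : R -> R) (x y : R) : x <= y ->
  (forall t, x <= t <= y -> is_derive f t (df t)) ->
  exists c, x <= c <= y /\ f y - f x = df c * (y - x).
Proof.
  intros Hxy Hder. destruct (Req_dec x y) as [<- | Hne].
  - exists x. split; [lra | ring].
  - destruct (MVT_gen f x y df) as [c [Hc Hmvt]].
    + intros t Ht. rewrite Rmin_left, Rmax_right in Ht by lra. apply Hder; lra.
    + intros t Ht. rewrite Rmin_left, Rmax_right in Ht by lra.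
      apply (is_derive_continuity_pt _ _ (df t)), Hder; lra.
    + rewrite Rmin_left, Rmax_right in Hc by lra. exists c. split; assumption.
Qed.

Lemma le_of_is_derive_nonneg (f df : R -> R) (x y : R) : x <= y ->
  (forall t, x <= t <= y -> is_derive f t (df t)) ->
  (forall t, x <= t <= y -> 0 <= df t) -> f x <= f y.
Proof.
  intros Hxy Hder Hpos. destruct (mvt_closed f df x y Hxy Hder) as [c [Hc Hmvt]].
  assert (0 <= df c * (y - x)) by (apply Rmult_le_pos; [apply Hpos, Hc | lra]). lra.
Qed.

Lemma eq_of_is_derive_zero (f df : R -> R) (x y : R) : x <= y ->
  (forall t, x <= t <= y -> is_derive f t (df t)) ->
  (forall t, x <= t <= y -> df t = 0) -> f x = f y.
Proof.
  intros Hxy Hder Hzero. destruct (mvt_closed f df x y Hxy Hder) as [c [Hc Hmvt]].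
  rewrite Hzero in Hmvt by exact Hc. lra.
Qed.

Lemma atan_le_id (z : R) : 0 <= z -> atan z <= z.
Proof.
  intros Hz.
  assert (Hmono : 0 - atan 0 <= z - atan z).
  { apply (le_of_is_derive_nonneg (fun u => u - atan u) (fun t => 1 - / (1 + t²))); [exact Hz | |].
    - intros t _. auto_derive; [auto | unfold Rsqr; field; nra].
    - intros t _. assert (1 <= 1 + t²) by (unfold Rsqr; nra).
      assert (/ (1 + t²) <= 1) by (rewrite <- Rinv_1; apply Rinv_le_contravar; lra). lra. }
  rewrite atan_0 in Hmono. lra.
Qed.

(* The Robin eigenvalues of [I_b] are the [m^2] with [robin_secular b al m] a
   positive multiple of [PI]. *)
Definition robin_secular (b al m : R) : R := m * b + 2 * atan (m / al).

(* [sqrt (lambda_j(I_b, al))]: the unique root of [robin_secular b al m = j PI]. *)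
Definition robin_freq (b al : R) (j : nat) : R :=
  epsilon (inhabits 0) (fun m => robin_secular b al m = INR j * PI).

Section Secular.

Variables b al : R.
Hypothesis Hb : 0 < b.
Hypothesis Hal : 0 < al.

Lemma robin_secular_lt (x y : R) : x < y -> robin_secular b al x < robin_secular b al y.
Proof.
  intros Hxy. unfold robin_secular.
  assert (atan (x / al) < atan (y / al)).
  { apply atan_increasing. apply Rmult_lt_compat_r; [apply Rinv_0_lt_compat |]; lra. }
  nra.
Qed.

Lemma robin_secular_le_inv (x y : R) :
  robin_secular b al x <= robin_secular b al y -> x <= y.
Proof.
  intros H. destruct (Rle_lt_dec x y) as [Hxy | Hyx]; [exact Hxy |].
  pose proof (robin_secular_lt y x Hyx). lra.
Qed.

Lemma robin_secular_0 : robin_secular b al 0 = 0.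
Proof. unfold robin_secular. rewrite Rdiv_0_l, atan_0. ring. Qed.

Lemma robin_secular_continuity : continuity (robin_secular b al).
Proof.
  intros m. apply (is_derive_continuity_pt _ _ (b + 2 * (/ al / (1 + (m / al) ^ 2)))).
  unfold robin_secular. auto_derive; [auto | unfold Rdiv; simpl; ring].
Qed.

Lemma robin_freq_exists (j : nat) : exists m, robin_secular b al m = INR j * PI.
Proof.
  pose proof PI_RGT_0.
  set (f := fun m => robin_secular b al m - INR j * PI).
  set (x := (INR j * PI - PI) / b). set (y := (INR j * PI + PI) / b).
  assert (Hxy : x < y) by (unfold x, y; apply Rmult_lt_compat_r; [apply Rinv_0_lt_compat |]; lra).
  assert (Hfx : f x < 0).
  { unfold f, robin_secular. pose proof (atan_bound (x / al)).
    replace (x * b) with (INR j * PI - PI) by (unfold x; field; lra). lra. }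
  assert (Hfy : 0 < f y).
  { unfold f, robin_secular. pose proof (atan_bound (y / al)).
    replace (y * b) with (INR j * PI + PI) by (unfold y; field; lra). lra. }
  assert (Hf : continuity f).
  { apply continuity_minus; [apply robin_secular_continuity; assumption | apply continuity_const].
    intros u v; reflexivity. }
  destruct (IVT f x y Hf Hxy Hfx Hfy) as [z [_ Hz]].
  exists z. unfold f in Hz. lra.
Qed.

Lemma robin_freq_spec (j : nat) : robin_secular b al (robin_freq b al j) = INR j * PI.
Proof. unfold robin_freq. apply epsilon_spec, robin_freq_exists. Qed.

Lemma robin_freq_unique (j : nat) (m : R) :
  robin_secular b al m = INR j * PI -> m = robin_freq b al j.
Proof.
  intros H. apply Rle_antisym; apply robin_secular_le_inv;
    rewrite H, robin_freq_spec; lra.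
Qed.

Lemma robin_freq_0 : robin_freq b al 0 = 0.
Proof.
  symmetry. apply robin_freq_unique. rewrite robin_secular_0. simpl. ring.
Qed.

Lemma robin_freq_lt (i j : nat) : (i < j)%nat -> robin_freq b al i < robin_freq b al j.
Proof.
  intros Hij. destruct (Rlt_le_dec (robin_freq b al i) (robin_freq b al j)) as [H | H];
    [exact H | exfalso].
  destruct H as [H | H].
  - pose proof (robin_secular_lt _ _ H) as Hs.
    rewrite !robin_freq_spec in Hs.
    apply lt_INR in Hij. pose proof PI_RGT_0. nra.
  - apply (f_equal (robin_secular b al)) in H. rewrite !robin_freq_spec in H.
    apply lt_INR in Hij. pose proof PI_RGT_0. nra.
Qed.

Lemma robin_freq_pos (j : nat) : (1 <= j)%nat -> 0 < robin_freq b al j.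
Proof. intros Hj. rewrite <- robin_freq_0. apply robin_freq_lt. lia. Qed.

Lemma robin_freq_nonneg (j : nat) : 0 <= robin_freq b al j.
Proof. destruct j; [rewrite robin_freq_0; lra | left; apply robin_freq_pos; lia]. Qed.

Lemma robin_freq_bounds (j : nat) : (1 <= j)%nat ->
  (INR j - 1) * PI / b < robin_freq b al j < INR j * PI / b.
Proof.
  intros Hj. pose proof (robin_freq_pos j Hj) as Hpos.
  pose proof (robin_freq_spec j) as Hspec. unfold robin_secular in Hspec.
  assert (0 < atan (robin_freq b al j / al)).
  { rewrite <- atan_0. apply atan_increasing, Rdiv_lt_0_compat; assumption. }
  pose proof (atan_bound (robin_freq b al j / al)).
  split; [apply Rlt_div_l | apply Rlt_div_r]; lra.
Qed.

End Secular.

Lemma is_derive_Rmult (f g : R -> R) (x df dg : R) :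
  is_derive f x df -> is_derive g x dg ->
  is_derive (fun t => f t * g t) x (df * g x + f x * dg).
Proof. intros Hf Hg. apply (is_derive_mult f g x df dg Hf Hg). intros; apply Rmult_comm. Qed.

Section RobinODE.

Variables b al lam : R.
Variables u u' : R -> R.
Hypothesis Hb : 0 < b.
Hypothesis Hal : 0 < al.
Hypothesis Hode : forall x, 0 <= x <= b -> is_derive u x (u' x) /\ is_derive u' x (- lam * u x).

Lemma ode_energy_const (x y : R) : 0 <= x <= y -> y <= b ->
  u' x * u' x + lam * (u x * u x) = u' y * u' y + lam * (u y * u y).
Proof.
  intros Hx Hy.
  apply (eq_of_is_derive_zero (fun t => u' t * u' t + lam * (u t * u t)) (fun _ => 0));
    [lra | | reflexivity].
  intros t Ht. destruct (Hode t ltac:(lra)) as [Du Du'].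
  eapply is_derive_ext_loc; [now apply filter_forall |].
  replace 0 with ((- lam * u t) * u' t + u' t * (- lam * u t) + lam * (u' t * u t + u t * u' t))
    by ring.
  apply (is_derive_plus (fun t => u' t * u' t) (fun t => lam * (u t * u t))).
  - apply is_derive_Rmult; assumption.
  - apply (is_derive_scal (fun t => u t * u t)), is_derive_Rmult; assumption.
Qed.

Lemma ode_zero_of_zero_data_at_end (x : R) : 0 < lam -> 0 <= x <= b ->
  u b = 0 -> u' b = 0 -> u x = 0.
Proof.
  intros Hlam Hx Hub Hu'b.
  pose proof (ode_energy_const x b ltac:(lra) ltac:(lra)) as Hen.
  rewrite Hub, Hu'b in Hen.
  assert (Hsq : u x * u x = 0) by nra.
  destruct (Rmult_integral _ _ Hsq); assumption.
Qed.

Hypothesis Hrobin0 : - u' 0 + al * u 0 = 0.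
Hypothesis Hrobinb : u' b + al * u b = 0.

(* [(u u')' = u'^2 - lam u^2] is nonnegative when [lam <= 0], while the Robin
   conditions give [(u u')(0) >= 0 >= (u u')(b)]. *)
Lemma robin_solution_zero_of_nonpos (x : R) : lam <= 0 -> 0 <= x <= b -> u x = 0.
Proof.
  intros Hlam Hx.
  set (G := fun t => u t * u' t).
  assert (HG : forall t, 0 <= t <= b -> is_derive G t (u' t * u' t + u t * (- lam * u t))).
  { intros t Ht. destruct (Hode t Ht). apply is_derive_Rmult; assumption. }
  assert (HGmono : forall s t, 0 <= s <= t -> t <= b -> G s <= G t).
  { intros s t Hs Ht.
    apply (le_of_is_derive_nonneg G (fun r => u' r * u' r + u r * (- lam * u r))); [lra | |].
    - intros; apply HG; lra.
    - intros r _. nra. }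
  assert (HG0 : G 0 = al * (u 0 * u 0)) by (unfold G; replace (u' 0) with (al * u 0) by lra; ring).
  assert (HGb : G b = - al * (u b * u b))
    by (unfold G; replace (u' b) with (- al * u b) by lra; ring).
  assert (HG0b : G 0 <= G b) by (apply HGmono; lra).
  assert (Hu0 : u 0 * u 0 = 0) by nra.
  assert (HGzero : forall t, 0 <= t <= b -> G t = 0).
  { intros t Ht. pose proof (HGmono 0 t ltac:(lra) ltac:(lra)).
    pose proof (HGmono t b ltac:(lra) ltac:(lra)). nra. }
  assert (Hsq : u 0 * u 0 = u x * u x).
  { apply (eq_of_is_derive_zero (fun t => u t * u t) (fun t => u' t * u t + u t * u' t)); [lra | |].
    - intros t Ht. destruct (Hode t ltac:(lra)). apply is_derive_Rmult; assumption.
    - intros t Ht. pose proof (HGzero t ltac:(lra)) as Hz. unfold G in Hz. lra. }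
  rewrite Hu0 in Hsq. symmetry in Hsq.
  destruct (Rmult_integral _ _ Hsq); assumption.
Qed.

(* The Wronskian of [u] with [v t = m cos (m t) + al sin (m t)], which satisfies the
   Robin condition at [0], is constant and vanishes at [0]; at [b] it is [u b] times
   the left-hand side of [robin_secular_sin]. *)
Lemma robin_wronskian (m : R) : lam = m ^ 2 ->
  u b * ((al ^ 2 - m ^ 2) * sin (m * b) + 2 * al * m * cos (m * b)) = 0.
Proof.
  intros Hm.
  set (v := fun t => m * cos (m * t) + al * sin (m * t)).
  set (v' := fun t => - m ^ 2 * sin (m * t) + al * m * cos (m * t)).
  assert (Hv : forall t, is_derive v t (v' t)).
  { intros t. unfold v, v'. auto_derive; [auto | ring]. }
  assert (Hv' : forall t, is_derive v' t (- lam * v t)).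
  { intros t. unfold v, v'. auto_derive; [auto | rewrite Hm; ring]. }
  set (W := fun t => u t * v' t - u' t * v t).
  assert (HW : W 0 = W b).
  { apply (eq_of_is_derive_zero W (fun _ => 0)); [lra | | reflexivity].
    intros t Ht. destruct (Hode t Ht) as [Du Du'].
    eapply is_derive_ext_loc; [now apply filter_forall |].
    replace 0 with (u' t * v' t + u t * (- lam * v t) - ((- lam * u t) * v t + u' t * v' t))
      by ring.
    apply (is_derive_minus (fun t => u t * v' t) (fun t => u' t * v t));
      apply is_derive_Rmult; auto. }
  assert (HW0 : W 0 = 0).
  { unfold W, v, v'. rewrite Rmult_0_r, sin_0, cos_0. replace (u' 0) with (al * u 0) by lra. ring. }
  unfold W, v, v' in HW0, HW. replace (u' b) with (- al * u b) in HW by lra. lra.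
Qed.

End RobinODE.

Lemma robin_secular_sin (b al m : R) : 0 < al ->
  (al ^ 2 - m ^ 2) * sin (m * b) + 2 * al * m * cos (m * b)
  = (al ^ 2 + m ^ 2) * sin (robin_secular b al m).
Proof.
  intros Hal. unfold robin_secular.
  set (t := m / al).
  assert (Ht1 : 0 < 1 + t²) by (unfold Rsqr; nra).
  set (s := sqrt (1 + t²)).
  assert (Hs : s * s = 1 + t²) by (apply sqrt_sqrt; lra).
  assert (Hspos : 0 < s) by (apply sqrt_lt_R0; lra).
  rewrite sin_plus, sin_2a, cos_2a, sin_atan, cos_atan. fold s.
  assert (Hcos2 : 1 / s * (1 / s) - t / s * (t / s) = (al ^ 2 - m ^ 2) / (al ^ 2 + m ^ 2)).
  { replace (1 / s * (1 / s) - t / s * (t / s)) with ((1 - t * t) / (s * s)) by (field; lra).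
    rewrite Hs. unfold t, Rsqr. field. split; [nra | lra]. }
  assert (Hsin2 : 2 * (t / s) * (1 / s) = 2 * al * m / (al ^ 2 + m ^ 2)).
  { replace (2 * (t / s) * (1 / s)) with (2 * t / (s * s)) by (field; lra).
    rewrite Hs. unfold t, Rsqr. field. split; [nra | lra]. }
  rewrite Hcos2, Hsin2. field. nra.
Qed.

Section Spectrum.

Variables b al : R.
Hypothesis Hb : 0 < b.
Hypothesis Hal : 0 < al.

Lemma robin_eigenvalue_pos (lam : R) : robin_eigenvalue b al lam -> 0 < lam.
Proof.
  intros [u [u' [Hode [[x0 [Hx0 Hux0]] [Hrobin0 Hrobinb]]]]].
  destruct (Rlt_le_dec 0 lam) as [Hlam | Hlam]; [exact Hlam | exfalso].
  apply Hux0. apply (robin_solution_zero_of_nonpos b al lam u u'); assumption.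
Qed.

Lemma robin_eigenvalue_sin_secular (lam : R) : robin_eigenvalue b al lam ->
  sin (robin_secular b al (sqrt lam)) = 0.
Proof.
  intros Heig. pose proof (robin_eigenvalue_pos lam Heig) as Hlam.
  destruct Heig as [u [u' [Hode [[x0 [Hx0 Hux0]] [Hrobin0 Hrobinb]]]]].
  set (m := sqrt lam).
  assert (Hm : lam = m ^ 2) by (unfold m; rewrite pow2_sqrt; lra).
  assert (HF : (al ^ 2 - m ^ 2) * sin (m * b) + 2 * al * m * cos (m * b) = 0).
  { pose proof (robin_wronskian b al lam u u' Hb Hode Hrobin0 Hrobinb m Hm) as HW.
    destruct (Rmult_integral _ _ HW) as [Hub | HF]; [exfalso | exact HF].
    apply Hux0, (ode_zero_of_zero_data_at_end b lam u u' Hode x0 Hlam Hx0 Hub).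
    rewrite Hub in Hrobinb. lra. }
  rewrite robin_secular_sin in HF by exact Hal.
  destruct (Rmult_integral _ _ HF) as [Hpos | Hsin]; [nra | exact Hsin].
Qed.

(* The eigenfunction [t |-> m cos (m t) + al sin (m t)] satisfies the Robin
   condition at [0]; the one at [b] is the secular equation. *)
Lemma robin_eigenvalue_of_sin_secular (m : R) : 0 < m ->
  sin (robin_secular b al m) = 0 -> robin_eigenvalue b al (m ^ 2).
Proof.
  intros Hm Hsin.
  exists (fun t => m * cos (m * t) + al * sin (m * t)),
         (fun t => - m ^ 2 * sin (m * t) + al * m * cos (m * t)).
  split; [| split; [| split]].
  - intros x _. split; auto_derive; auto; ring.
  - exists 0. split; [lra |]. rewrite Rmult_0_r, sin_0, cos_0. lra.
  - rewrite Rmult_0_r, sin_0, cos_0. ring.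
  - pose proof (robin_secular_sin b al m Hal) as HF. rewrite Hsin, Rmult_0_r in HF.
    rewrite <- HF. ring.
Qed.

Lemma robin_eigenvalue_iff (lam : R) :
  robin_eigenvalue b al lam <-> exists j, (1 <= j)%nat /\ lam = robin_freq b al j ^ 2.
Proof.
  split.
  - intros Heig. pose proof (robin_eigenvalue_pos lam Heig) as Hlam.
    destruct (sin_eq_0_0 _ (robin_eigenvalue_sin_secular lam Heig)) as [z Hz].
    set (m := sqrt lam) in Hz.
    assert (Hmpos : 0 < m) by (apply sqrt_lt_R0; exact Hlam).
    assert (Hgpos : 0 < robin_secular b al m).
    { rewrite <- (robin_secular_0 b al). apply robin_secular_lt; assumption. }
    assert (Hz1 : (1 <= z)%Z).
    { rewrite Hz in Hgpos. pose proof PI_RGT_0.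
      assert (Hzpos : 0 < IZR z) by (apply (Rmult_lt_reg_r PI); lra).
      apply lt_IZR in Hzpos. lia. }
    exists (Z.to_nat z). split; [lia |].
    rewrite <- (robin_freq_unique b al Hb Hal (Z.to_nat z) m).
    + unfold m. rewrite pow2_sqrt; lra.
    + rewrite INR_IZR_INZ, Znat.Z2Nat.id by lia. exact Hz.
  - intros [j [Hj ->]].
    apply robin_eigenvalue_of_sin_secular; [apply robin_freq_pos; assumption |].
    rewrite robin_freq_spec by assumption.
    apply sin_eq_0_1. exists (Z.of_nat j). rewrite <- INR_IZR_INZ. reflexivity.
Qed.

Lemma robin_freq_sq_lt_iff (i j : nat) :
  robin_freq b al i ^ 2 < robin_freq b al j ^ 2 <-> (i < j)%nat.
Proof.
  pose proof (robin_freq_nonneg b al Hb Hal i). pose proof (robin_freq_nonneg b al Hb Hal j).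
  split.
  - intros Hlt. destruct (Nat.lt_ge_cases i j) as [Hij | Hji]; [exact Hij | exfalso].
    destruct (Nat.eq_dec i j) as [-> | Hne]; [lra |].
    pose proof (robin_freq_lt b al Hb Hal j i ltac:(lia)). nra.
  - intros Hij. pose proof (robin_freq_lt b al Hb Hal i j Hij). nra.
Qed.

Definition robin_evs_below (j : nat) : list R :=
  map (fun i => robin_freq b al i ^ 2) (seq 1 (j - 1)).

Lemma robin_evs_below_NoDup (j : nat) : NoDup (robin_evs_below j).
Proof.
  apply Injective_map_NoDup; [| apply seq_NoDup].
  intros i i' Heq. destruct (Nat.lt_total i i') as [Hlt | [Heq' | Hlt]]; [| exact Heq' |].
  - apply robin_freq_sq_lt_iff in Hlt. lra.
  - apply robin_freq_sq_lt_iff in Hlt. lra.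
Qed.

Lemma robin_evs_below_In (j : nat) (x : R) : (1 <= j)%nat ->
  In x (robin_evs_below j) <-> robin_eigenvalue b al x /\ x < robin_freq b al j ^ 2.
Proof.
  intros Hj. unfold robin_evs_below. rewrite in_map_iff, robin_eigenvalue_iff. split.
  - intros [i [<- Hi]]. apply in_seq in Hi.
    split; [exists i; split; [lia | reflexivity] | apply robin_freq_sq_lt_iff; lia].
  - intros [[i [Hi ->]] Hlt]. apply robin_freq_sq_lt_iff in Hlt.
    exists i. split; [reflexivity | apply in_seq; lia].
Qed.

Lemma robin_evs_below_length (j : nat) : length (robin_evs_below j) = (j - 1)%nat.
Proof. unfold robin_evs_below. rewrite length_map, length_seq. reflexivity. Qed.

Lemma is_kth_robin_eigenvalue_iff (k : nat) (lam : R) : (1 <= k)%nat ->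
  is_kth_robin_eigenvalue b al k lam <-> lam = robin_freq b al k ^ 2.
Proof.
  intros Hk. split.
  - intros [Heig [l [Hnodup [Hlen Hmem]]]].
    apply robin_eigenvalue_iff in Heig as [j [Hj ->]].
    assert (Hsame : length l = length (robin_evs_below j)).
    { apply Nat.le_antisymm; apply NoDup_incl_length; try assumption;
        try apply robin_evs_below_NoDup; intros x Hx;
        [apply robin_evs_below_In, Hmem | apply Hmem, robin_evs_below_In]; assumption. }
    rewrite robin_evs_below_length, Hlen in Hsame.
    replace j with k by lia. reflexivity.
  - intros ->. split; [apply robin_eigenvalue_iff; exists k; split; [exact Hk | reflexivity] |].
    exists (robin_evs_below k).
    split; [apply robin_evs_below_NoDup | split; [apply robin_evs_below_length |]].
    intros mu. apply robin_evs_below_In, Hk.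
Qed.

Lemma robin_ev_freq (k : nat) : (1 <= k)%nat -> robin_ev b al k = robin_freq b al k ^ 2.
Proof.
  intros Hk. unfold robin_ev. apply (is_kth_robin_eigenvalue_iff k _ Hk).
  apply epsilon_spec. exists (robin_freq b al k ^ 2). apply is_kth_robin_eigenvalue_iff; trivial.
Qed.

End Spectrum.

Section FirstFrequency.

Variables b al : R.
Hypothesis Hb : 0 < b.
Hypothesis Hal : 0 < al.

(* Since [atan (1/z) = PI/2 - atan z], the secular equation for [j = 1] reads
   [tan (m b / 2) = al / m]. *)
Lemma robin_freq1_tan :
  0 < robin_freq b al 1 /\ robin_freq b al 1 * b < PI /\
  atan (al / robin_freq b al 1) = robin_freq b al 1 * b / 2.
Proof.
  set (m := robin_freq b al 1).
  assert (Hm : 0 < m) by (apply robin_freq_pos; auto).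
  destruct (robin_freq_bounds b al Hb Hal 1 (le_n 1)) as [_ Hup]. fold m in Hup. simpl INR in Hup.
  split; [exact Hm | split].
  - apply Rlt_div_r in Hup; lra.
  - pose proof (robin_freq_spec b al Hb 1) as Hspec. fold m in Hspec.
    unfold robin_secular in Hspec. simpl INR in Hspec.
    replace (al / m) with (/ (m / al)) by (field; lra).
    rewrite atan_inv by (apply Rdiv_lt_0_compat; assumption). lra.
Qed.

Lemma robin_freq1_sq_le : robin_freq b al 1 ^ 2 * b <= 2 * al.
Proof.
  destruct robin_freq1_tan as [Hm [_ Htan]].
  set (m := robin_freq b al 1) in *.
  pose proof (atan_le_id (al / m) ltac:(left; apply Rdiv_lt_0_compat; assumption)) as Hle.
  rewrite Htan in Hle. apply (Rmult_le_compat_r m) in Hle; [| lra].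
  replace (al / m * m) with al in Hle by (field; lra). nra.
Qed.

(* Becker-Stark at [x = m b / 2]. *)
Lemma robin_freq1_sq_ge : 2 * PI ^ 2 * al <= robin_freq b al 1 ^ 2 * (b * (PI ^ 2 + 2 * al * b)).
Proof.
  destruct robin_freq1_tan as [Hm [Hmb Htan]].
  set (m := robin_freq b al 1) in *.
  set (x := m * b / 2) in *.
  assert (Hx : 0 < x < PI / 2) by (unfold x; split; nra).
  assert (Hcos : 0 < cos x) by (apply cos_gt_0; lra).
  assert (Hsin : sin x = al / m * cos x).
  { pose proof (tan_atan (al / m)) as Ht. rewrite Htan in Ht. unfold tan in Ht.
    rewrite <- Ht. field. lra. }
  pose proof (becker_stark x Hx) as Hbs. rewrite Hsin in Hbs.
  assert (Hbs' : (PI ^ 2 - 4 * x ^ 2) * al <= PI ^ 2 * x * m).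
  { replace ((PI ^ 2 - 4 * x ^ 2) * al) with ((PI ^ 2 - 4 * x ^ 2) * (al / m) * cos x * (m / cos x))
      by (field; lra).
    replace (PI ^ 2 * x * m) with (PI ^ 2 * x * cos x * (m / cos x)) by (field; lra).
    apply Rmult_le_compat_r; [apply Rdiv_le_0_compat |]; lra. }
  unfold x in Hbs'. nra.
Qed.

End FirstFrequency.

(* From [robin_secular x al p = robin_secular y al q] and the monotonicity of [atan],
   [p >= q] forces [p x <= q y]. *)
Lemma robin_freq_dist (x y al : R) (j : nat) : 0 < x -> 0 < y -> 0 < al ->
  x * Rabs (robin_freq x al j - robin_freq y al j) <= robin_freq y al j * Rabs (x - y).
Proof.
  intros Hx Hy Hal.
  set (p := robin_freq x al j). set (q := robin_freq y al j).
  assert (Hq : 0 <= q) by (apply robin_freq_nonneg; assumption).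
  assert (Heq : p * x + 2 * atan (p / al) = q * y + 2 * atan (q / al)).
  { pose proof (robin_freq_spec x al Hx j) as Hp. pose proof (robin_freq_spec y al Hy j) as Hq'.
    unfold robin_secular in Hp, Hq'. fold p in Hp. fold q in Hq'. lra. }
  assert (Hatan : forall s t, s < t -> atan (s / al) < atan (t / al)).
  { intros s t Hst. apply atan_increasing, Rmult_lt_compat_r; [apply Rinv_0_lt_compat |]; lra. }
  assert (q * (x - y) <= q * Rabs (x - y)) by (apply Rmult_le_compat_l; [lra | apply RRle_abs]).
  assert (q * (y - x) <= q * Rabs (x - y)).
  { apply Rmult_le_compat_l; [lra |]. rewrite Rabs_minus_sym. apply RRle_abs. }
  destruct (Rtotal_order p q) as [Hpq | [Hpq | Hpq]].
  - pose proof (Hatan p q Hpq). rewrite Rabs_left by lra. nra.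
  - rewrite Hpq, Rminus_diag, Rabs_R0 in *. nra.
  - pose proof (Hatan q p Hpq). rewrite Rabs_right by lra. nra.
Qed.

Lemma robin_freq_continuity_pt (b al : R) (j : nat) : 0 < b -> 0 < al ->
  continuity_pt (fun x => robin_freq x al j) b.
Proof.
  intros Hb Hal eps Heps.
  set (q := robin_freq b al j).
  assert (Hq : 0 <= q) by (apply robin_freq_nonneg; assumption).
  exists (Rmin (b / 2) (eps * b / (2 * (q + 1)))).
  split; [apply Rmin_pos; apply Rdiv_lt_0_compat; nra |].
  intros x [_ Hxb]. simpl in *. unfold R_dist in *.
  assert (Hxb1 : Rabs (x - b) < b / 2) by (eapply Rlt_le_trans; [exact Hxb | apply Rmin_l]).
  assert (Hxb2 : Rabs (x - b) < eps * b / (2 * (q + 1)))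
    by (eapply Rlt_le_trans; [exact Hxb | apply Rmin_r]).
  assert (Hx : b / 2 < x) by (apply Rabs_def2 in Hxb1; lra).
  pose proof (robin_freq_dist x b al j ltac:(lra) Hb Hal) as Hdist. fold q in Hdist.
  pose proof (Rabs_pos (robin_freq x al j - q)).
  apply (Rmult_lt_reg_l (b / 2)); [lra |].
  assert (Hsmall : (q + 1) * Rabs (x - b) < b / 2 * eps).
  { apply (Rmult_lt_compat_l (q + 1)) in Hxb2; [| lra].
    replace ((q + 1) * (eps * b / (2 * (q + 1)))) with (b / 2 * eps) in Hxb2 by (field; lra).
    exact Hxb2. }
  pose proof (Rabs_pos (x - b)).
  nra.
Qed.

Definition Lam_freq (A al : R) (k : nat) (a : R) : R :=
  robin_freq (sqrt A * a) al k ^ 2 + robin_freq (sqrt A / a) al 1 ^ 2.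

(* By [robin_freq1_sq_ge], [lambda_1(I_(sqrt A / a)) >= ev1_rate A al eta * a]
   as soon as [sqrt A / a <= eta]. *)
Definition ev1_rate (A al eta : R) : R := 2 * PI ^ 2 * al / (sqrt A * (PI ^ 2 + 2 * al * eta)).

Section TwoIntervals.

Variables A al : R.
Hypothesis HA : 0 < A.
Hypothesis Hal : 0 < al.

Lemma sqrt_A_pos : 0 < sqrt A.
Proof. apply sqrt_lt_R0, HA. Qed.

Lemma Lam_fun_freq (k : nat) (a : R) : (1 <= k)%nat -> 0 < a ->
  Lam_fun A al k a = Lam_freq A al k a.
Proof.
  intros Hk Ha. pose proof sqrt_A_pos.
  assert (0 < sqrt A / a) by (apply Rdiv_lt_0_compat; assumption).
  assert (0 < sqrt A * a) by (apply Rmult_lt_0_compat; assumption).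
  unfold Lam_fun, Lam_freq. rewrite !robin_ev_freq by (assumption || lia). reflexivity.
Qed.

Lemma ev1_rate_pos (eta : R) : 0 <= eta -> 0 < ev1_rate A al eta.
Proof.
  intros Heta. pose proof sqrt_A_pos. pose proof PI_RGT_0.
  assert (0 < PI ^ 2) by (apply pow_lt; lra).
  unfold ev1_rate. apply Rdiv_lt_0_compat; [| apply Rmult_lt_0_compat]; nra.
Qed.

Lemma Lam_freq_ge (k : nat) (a eta : R) : (1 <= k)%nat -> 0 < a -> sqrt A / a <= eta ->
  (INR k - 1) ^ 2 * PI ^ 2 / A / a ^ 2 + ev1_rate A al eta * a <= Lam_freq A al k a.
Proof.
  intros Hk Ha Heta. pose proof sqrt_A_pos as Hs. pose proof PI_RGT_0.
  assert (Hss : sqrt A * sqrt A = A) by (apply sqrt_sqrt; lra).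
  assert (Hshort : 0 < sqrt A / a) by (apply Rdiv_lt_0_compat; assumption).
  assert (Hlong : 0 < sqrt A * a) by (apply Rmult_lt_0_compat; assumption).
  assert (HP2 : 0 < PI ^ 2) by (apply pow_lt; lra).
  unfold Lam_freq. apply Rplus_le_compat.
  - destruct (robin_freq_bounds (sqrt A * a) al Hlong Hal k Hk) as [Hlow _].
    assert (Hk1 : 0 <= INR k - 1) by (apply le_INR in Hk; simpl in Hk; lra).
    replace ((INR k - 1) ^ 2 * PI ^ 2 / A / a ^ 2) with (((INR k - 1) * PI / (sqrt A * a)) ^ 2)
      by (set (s := sqrt A) in *; rewrite <- Hss; field; lra).
    apply pow_incr. split; [apply Rdiv_le_0_compat; nra | lra].
  - pose proof (robin_freq1_sq_ge (sqrt A / a) al Hshort Hal) as Hge.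
    set (m2 := robin_freq (sqrt A / a) al 1 ^ 2) in *.
    assert (Hden : 0 < PI ^ 2 + 2 * al * (sqrt A / a)) by nra.
    apply (Rle_trans _ (2 * PI ^ 2 * al / (sqrt A / a * (PI ^ 2 + 2 * al * (sqrt A / a))))).
    + unfold ev1_rate.
      replace (2 * PI ^ 2 * al / (sqrt A / a * (PI ^ 2 + 2 * al * (sqrt A / a))))
        with (2 * PI ^ 2 * al / (sqrt A * (PI ^ 2 + 2 * al * (sqrt A / a))) * a)
        by (field; split; nra).
      apply Rmult_le_compat_r; [lra |].
      apply Rmult_le_compat_l; [nra |].
      apply Rinv_le_contravar; [apply Rmult_lt_0_compat; lra |].
      apply Rmult_le_compat_l; nra.
    + apply Rle_div_l; [apply Rmult_lt_0_compat; lra | lra].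
Qed.

Lemma Lam_freq_le (k : nat) (a : R) : (1 <= k)%nat -> 0 < a ->
  Lam_freq A al k a <= (INR k * PI / (sqrt A * a)) ^ 2 + 2 * al * a / sqrt A.
Proof.
  intros Hk Ha. pose proof sqrt_A_pos as Hs.
  assert (Hshort : 0 < sqrt A / a) by (apply Rdiv_lt_0_compat; assumption).
  assert (Hlong : 0 < sqrt A * a) by (apply Rmult_lt_0_compat; assumption).
  unfold Lam_freq. apply Rplus_le_compat.
  - destruct (robin_freq_bounds (sqrt A * a) al Hlong Hal k Hk) as [_ Hup].
    pose proof (robin_freq_pos (sqrt A * a) al Hlong Hal k Hk).
    apply pow_incr. lra.
  - pose proof (robin_freq1_sq_le (sqrt A / a) al Hshort Hal) as Hle.
    apply (Rmult_le_reg_r (sqrt A / a)); [exact Hshort |].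
    replace (2 * al * a / sqrt A * (sqrt A / a)) with (2 * al) by (field; lra). lra.
Qed.

Lemma Lam_freq_ge_amgm (k : nat) (a eta t : R) : (1 <= k)%nat -> 0 < a -> 0 <= eta ->
  sqrt A / a <= eta -> 0 <= t ->
  4 * t ^ 3 <= (INR k - 1) ^ 2 * PI ^ 2 / A * ev1_rate A al eta ^ 2 ->
  3 * t <= Lam_freq A al k a.
Proof.
  intros Hk Ha Heta Hsa Ht Hcube.
  eapply Rle_trans; [| apply (Lam_freq_ge k a eta Hk Ha Hsa)].
  apply amgm_cubic; [apply ev1_rate_pos | | |]; assumption.
Qed.

Lemma ev1_rate_mul_le (k : nat) (a : R) : (1 <= k)%nat -> 1 <= a ->
  ev1_rate A al (sqrt A) * a <= Lam_freq A al k a.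
Proof.
  intros Hk Ha. pose proof sqrt_A_pos as Hs. pose proof PI_RGT_0.
  eapply Rle_trans; [| apply (Lam_freq_ge k a (sqrt A)); [assumption | lra |]].
  - assert (0 <= (INR k - 1) ^ 2 * PI ^ 2 / A / a ^ 2).
    { apply Rdiv_le_0_compat; [apply Rdiv_le_0_compat; [| lra] | apply pow_lt; lra].
      apply Rmult_le_pos; [apply pow2_ge_0 | nra]. }
    lra.
  - apply Rle_div_l; [lra |]. rewrite <- (Rmult_1_r (sqrt A)) at 1. apply Rmult_le_compat_l; lra.
Qed.

Lemma Lam_freq_continuity_pt (k : nat) (c : R) : 0 < c -> continuity_pt (Lam_freq A al k) c.
Proof.
  intros Hc. pose proof sqrt_A_pos as Hs.
  assert (Hlong : continuity_pt (fun a => robin_freq (sqrt A * a) al k) c).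
  { apply (continuity_pt_comp (fun a => sqrt A * a) (fun b => robin_freq b al k)).
    - apply (is_derive_continuity_pt _ _ (sqrt A)). auto_derive; [auto | ring].
    - apply robin_freq_continuity_pt; [apply Rmult_lt_0_compat |]; assumption. }
  assert (Hshort : continuity_pt (fun a => robin_freq (sqrt A / a) al 1) c).
  { apply (continuity_pt_comp (fun a => sqrt A / a) (fun b => robin_freq b al 1)).
    - apply (is_derive_continuity_pt _ _ (- sqrt A / c ^ 2)). auto_derive; [lra | field; lra].
    - apply robin_freq_continuity_pt; [apply Rdiv_lt_0_compat |]; assumption. }
  assert (Hsq : forall y, continuity_pt (fun x => x ^ 2) y).
  { intros y. apply (is_derive_continuity_pt _ _ (2 * y)). auto_derive; [auto | ring]. }
  unfold Lam_freq. apply continuity_pt_plus.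
  - apply (continuity_pt_comp (fun a => robin_freq (sqrt A * a) al k) (fun x => x ^ 2)); auto.
  - apply (continuity_pt_comp (fun a => robin_freq (sqrt A / a) al 1) (fun x => x ^ 2)); auto.
Qed.

End TwoIntervals.

Lemma LambdaK1_le (A al : R) (k : nat) (a : R) : 1 <= a ->
  Rbar_le (LambdaK1 A al k) (Lam_fun A al k a).
Proof. intros Ha. apply (Glb_Rbar_correct _). exists a. split; [exact Ha | reflexivity]. Qed.

Lemma LambdaK1_ge (A al : R) (k : nat) (c : R) :
  (forall a, 1 <= a -> c <= Lam_fun A al k a) -> Rbar_le c (LambdaK1 A al k).
Proof. intros Hc. apply (Glb_Rbar_correct _). intros x [a [Ha ->]]. apply Hc, Ha. Qed.

Lemma LambdaK1_eq_min (A al : R) (k : nat) (a0 : R) : 1 <= a0 ->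
  (forall a, 1 <= a -> Lam_fun A al k a0 <= Lam_fun A al k a) ->
  LambdaK1 A al k = Lam_fun A al k a0.
Proof.
  intros Ha0 Hmin. apply is_glb_Rbar_unique. split.
  - intros x [a [Ha ->]]. apply Hmin, Ha.
  - intros y Hy. apply Hy. exists a0. split; [exact Ha0 | reflexivity].
Qed.

Lemma rpow_two_thirds_INR (k : nat) : (1 <= k)%nat ->
  0 < rpow (INR k) (2/3) /\ rpow (INR k) (2/3) ^ 3 = INR k ^ 2 /\ INR k <= rpow (INR k) (2/3) ^ 2.
Proof.
  intros Hk. assert (H1 : 1 <= INR k) by (apply le_INR in Hk; exact Hk).
  rewrite rpow_Rpower by lra.
  pose proof (Rpower_pos (INR k) (2/3)).
  pose proof (Rpower_two_thirds_cube (INR k) ltac:(lra)) as Hcube.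
  split; [assumption | split; [exact Hcube |]].
  apply pow3_le_inv; [apply pow2_ge_0 |].
  replace ((Rpower (INR k) (2 / 3) ^ 2) ^ 3) with ((Rpower (INR k) (2 / 3) ^ 3) ^ 2) by ring.
  rewrite Hcube. nra.
Qed.

Definition asym_rate (A al : R) : R := rpow (PI * al / A) (2/3).

Definition lower_bound_value (A al : R) (k : nat) : R :=
  3 * PI ^ 2 * rpow al (2/3) / (rpow (PI ^ 2 + 2 * sqrt A * al) (2/3) * rpow A (2/3))
  * rpow (INR k - 2) (2/3).

Section Infimum.

Variables A al : R.
Hypothesis HA : 0 < A.
Hypothesis Hal : 0 < al.

(* [Lam_fun] grows at least linearly ([ev1_rate_mul_le]), so its infimum over
   [[1, oo)] is a minimum over a compact interval. *)
Lemma Lam_fun_attains_min (k : nat) : (1 <= k)%nat ->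
  exists a0, 1 <= a0 /\ forall a, 1 <= a -> Lam_fun A al k a0 <= Lam_fun A al k a.
Proof.
  intros Hk. pose proof (sqrt_A_pos A HA).
  set (rate := ev1_rate A al (sqrt A)).
  assert (Hrate : 0 < rate) by (apply ev1_rate_pos; [assumption | assumption | lra]).
  set (M := 1 + Lam_freq A al k 1 / rate).
  assert (HM : 1 <= M).
  { pose proof (ev1_rate_mul_le A al HA Hal k 1 Hk (Rle_refl 1)) as Hlin. fold rate in Hlin.
    assert (0 <= Lam_freq A al k 1 / rate) by (apply Rdiv_le_0_compat; lra). unfold M; lra. }
  destruct (continuity_ab_min (Lam_freq A al k) 1 M HM) as [a0 [Hmin Ha0]].
  { intros c Hc. apply Lam_freq_continuity_pt; lra. }
  exists a0. split; [lra |]. intros a Ha.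
  rewrite !Lam_fun_freq by (assumption || lra).
  destruct (Rle_lt_dec a M) as [HaM | HMa]; [apply Hmin; lra |].
  assert (Lam_freq A al k a0 <= Lam_freq A al k 1) by (apply Hmin; lra).
  pose proof (ev1_rate_mul_le A al HA Hal k a Hk Ha) as Hlin. fold rate in Hlin.
  assert (rate * M < rate * a) by (apply Rmult_lt_compat_l; assumption).
  assert (rate * M = rate + Lam_freq A al k 1) by (unfold M; field; lra).
  lra.
Qed.

Lemma LambdaK1_ge_cubic (k : nat) (t : R) : (1 <= k)%nat -> 0 <= t ->
  4 * t ^ 3 <= (INR k - 1) ^ 2 * PI ^ 2 / A * ev1_rate A al (sqrt A) ^ 2 ->
  Rbar_le (3 * t) (LambdaK1 A al k).
Proof.
  intros Hk Ht Hcube. pose proof (sqrt_A_pos A HA).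
  apply LambdaK1_ge. intros a Ha. rewrite Lam_fun_freq by (assumption || lra).
  apply (Lam_freq_ge_amgm A al HA Hal k a (sqrt A) t); try assumption; try lra.
  apply Rle_div_l; [lra |]. rewrite <- (Rmult_1_r (sqrt A)) at 1. apply Rmult_le_compat_l; lra.
Qed.

Lemma lower_bound_constant_cube (k : nat) : (2 <= k)%nat ->
  0 <= lower_bound_value A al k / 3 /\
  4 * (lower_bound_value A al k / 3) ^ 3
  = (INR k - 2) ^ 2 * PI ^ 2 / A * ev1_rate A al (sqrt A) ^ 2.
Proof.
  intros Hk. pose proof (sqrt_A_pos A HA). pose proof PI_RGT_0.
  assert (Hss : sqrt A * sqrt A = A) by (apply sqrt_sqrt; lra).
  unfold lower_bound_value. set (D := PI ^ 2 + 2 * sqrt A * al).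
  assert (HD : 0 < D) by (unfold D; nra).
  assert (Hk2 : 0 <= INR k - 2) by (apply le_INR in Hk; simpl in Hk; lra).
  rewrite !(rpow_Rpower al), !(rpow_Rpower D), !(rpow_Rpower A) by assumption.
  pose proof (Rpower_pos al (2/3)). pose proof (Rpower_pos D (2/3)).
  pose proof (Rpower_pos A (2/3)).
  destruct Hk2 as [Hk2 | Hk2].
  - rewrite rpow_Rpower by assumption. pose proof (Rpower_pos (INR k - 2) (2/3)).
    assert (HP2 : 0 < PI ^ 2) by (apply pow_lt; lra).
    split.
    { apply Rdiv_le_0_compat; [left | lra].
      apply Rmult_lt_0_compat; [apply Rdiv_lt_0_compat |]; try (apply Rmult_lt_0_compat); lra. }
    replace ((3 * PI ^ 2 * Rpower al (2 / 3) / (Rpower D (2 / 3) * Rpower A (2 / 3)) *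
              Rpower (INR k - 2) (2 / 3) / 3) ^ 3)
      with (PI ^ 6 * Rpower al (2 / 3) ^ 3 * Rpower (INR k - 2) (2 / 3) ^ 3 /
            (Rpower D (2 / 3) ^ 3 * Rpower A (2 / 3) ^ 3)) by (field; lra).
    rewrite !Rpower_two_thirds_cube by assumption.
    unfold ev1_rate, D. set (s := sqrt A) in *. rewrite <- Hss. field. split; nra.
  - rewrite <- Hk2, rpow_0_l. split; [lra |].
    replace (INR k - 2) with 0 by lra. field. lra.
Qed.

Lemma LambdaK1_lower_bound (k : nat) : (2 <= k)%nat ->
  Rbar_le (lower_bound_value A al k) (LambdaK1 A al k).
Proof.
  intros Hk. destruct (lower_bound_constant_cube k Hk) as [Hpos Hcube].
  replace (lower_bound_value A al k) with (3 * (lower_bound_value A al k / 3)) by field.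
  apply LambdaK1_ge_cubic; [lia | exact Hpos |]. rewrite Hcube.
  pose proof PI_RGT_0.
  apply Rmult_le_compat_r; [apply pow2_ge_0 |].
  apply Rmult_le_compat_r; [left; apply Rinv_0_lt_compat; assumption |].
  apply Rmult_le_compat_r; [apply pow2_ge_0 |].
  assert (2 <= INR k) by (apply le_INR in Hk; exact Hk).
  apply pow_incr. lra.
Qed.

End Infimum.

Definition minimizer_lo (A al : R) : R := sqrt (PI ^ 2 / (12 * A * asym_rate A al)).

Definition minimizer_hi (A al : R) : R := 3 * asym_rate A al / ev1_rate A al (sqrt A).

Section Asymptotics.

Variables A al : R.
Hypothesis HA : 0 < A.
Hypothesis Hal : 0 < al.

Lemma asym_rate_pos : 0 < asym_rate A al.
Proof.
  pose proof PI_RGT_0. unfold asym_rate.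
  rewrite rpow_Rpower by (apply Rdiv_lt_0_compat; nra). apply Rpower_pos.
Qed.

Lemma asym_rate_cube : asym_rate A al ^ 3 = (PI * al / A) ^ 2.
Proof.
  pose proof PI_RGT_0. assert (0 < PI * al / A) by (apply Rdiv_lt_0_compat; nra).
  unfold asym_rate. rewrite rpow_Rpower by assumption. apply Rpower_two_thirds_cube; assumption.
Qed.

(* The minimizing length balances [(k PI / (sqrt A a))^2 = al a / sqrt A]. *)
Lemma Lam_fun_balanced (k : nat) : (1 <= k)%nat -> al <= PI ^ 2 / sqrt A * INR k ^ 2 ->
  exists a, 1 <= a /\ Lam_fun A al k a <= 3 * asym_rate A al * rpow (INR k) (2/3).
Proof.
  intros Hk Hcond. pose proof (sqrt_A_pos A HA) as Hs. pose proof PI_RGT_0.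
  assert (Hss : sqrt A * sqrt A = A) by (apply sqrt_sqrt; lra).
  assert (Hk1 : 1 <= INR k) by (apply le_INR in Hk; exact Hk).
  set (X := INR k ^ 2 * PI ^ 2 / (sqrt A * al)).
  assert (HX : 1 <= X).
  { unfold X. apply Rle_div_r; [nra |].
    apply (Rmult_le_compat_l (sqrt A)) in Hcond; [| lra].
    replace (sqrt A * (PI ^ 2 / sqrt A * INR k ^ 2)) with (INR k ^ 2 * PI ^ 2) in Hcond
      by (field; lra). lra. }
  set (a := Rpower X (1/3)).
  assert (Ha3 : a ^ 3 = X) by (apply Rpower_one_third_cube; lra).
  assert (Ha : 0 < a) by apply Rpower_pos.
  assert (Ha1 : 1 <= a) by (apply pow3_le_inv; lra).
  exists a. split; [exact Ha1 |].
  rewrite Lam_fun_freq by (assumption || lra).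
  eapply Rle_trans; [apply Lam_freq_le; assumption |].
  assert (Hbal : (INR k * PI / (sqrt A * a)) ^ 2 = al * a / sqrt A).
  { apply (Rmult_eq_reg_r (a ^ 2)); [| nra].
    replace (al * a / sqrt A * a ^ 2) with (al * a ^ 3 / sqrt A) by (field; lra).
    rewrite Ha3. unfold X. field. lra. }
  assert (Hval : al * a / sqrt A = asym_rate A al * rpow (INR k) (2 / 3)).
  { destruct (rpow_two_thirds_INR k Hk) as [Ht [Ht3 _]].
    pose proof asym_rate_pos.
    apply pow3_inj;
      [left; apply Rdiv_lt_0_compat; nra | left; apply Rmult_lt_0_compat; assumption |].
    rewrite Rpow_mult_distr, asym_rate_cube, Ht3.
    replace ((al * a / sqrt A) ^ 3) with (al ^ 3 * a ^ 3 / (sqrt A * sqrt A * sqrt A))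
      by (field; lra).
    rewrite Ha3. unfold X. set (s := sqrt A) in *. rewrite <- Hss. field. lra. }
  rewrite Hbal, (Rmult_assoc 3), <- Hval. right. field. lra.
Qed.

Lemma LambdaK1_upper_bound (k : nat) : (1 <= k)%nat -> al <= PI ^ 2 / sqrt A * INR k ^ 2 ->
  Rbar_le (LambdaK1 A al k) (3 * asym_rate A al * rpow (INR k) (2/3)).
Proof.
  intros Hk Hcond. destruct (Lam_fun_balanced k Hk Hcond) as [a [Ha Hle]].
  eapply Rbar_le_trans; [apply (LambdaK1_le A al k a Ha) | exact Hle].
Qed.

Lemma balance_condition_eventually :
  exists K, (2 <= K)%nat /\ forall k, (K <= k)%nat -> al <= PI ^ 2 / sqrt A * INR k ^ 2.
Proof.
  pose proof (sqrt_A_pos A HA) as Hs. pose proof PI_RGT_0.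
  assert (HP2 : 0 < PI ^ 2) by (apply pow_lt; lra).
  destruct (INR_archimed 1 (al * sqrt A / PI ^ 2) ltac:(lra)) as [N HN].
  exists (Nat.max 2 N). split; [lia |]. intros k Hk.
  assert (HkN : INR N <= INR k) by (apply le_INR; lia).
  assert (Hk1 : 1 <= INR k) by (apply (le_INR 1); lia).
  assert (al * sqrt A / PI ^ 2 < INR k ^ 2) by nra.
  apply (Rmult_le_reg_l (sqrt A / PI ^ 2)); [apply Rdiv_lt_0_compat; assumption |].
  replace (sqrt A / PI ^ 2 * (PI ^ 2 / sqrt A * INR k ^ 2)) with (INR k ^ 2) by (field; lra).
  replace (sqrt A / PI ^ 2 * al) with (al * sqrt A / PI ^ 2) by (field; lra). lra.
Qed.

Lemma LambdaK1_minimizer (k : nat) : (1 <= k)%nat -> al <= PI ^ 2 / sqrt A * INR k ^ 2 ->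
  exists a, 1 <= a /\ LambdaK1 A al k = Lam_fun A al k a /\
    Lam_fun A al k a <= 3 * asym_rate A al * rpow (INR k) (2/3).
Proof.
  intros Hk Hcond.
  destruct (Lam_fun_attains_min A al HA Hal k Hk) as [a0 [Ha0 Hmin]].
  destruct (Lam_fun_balanced k Hk Hcond) as [a1 [Ha1 Hup]].
  exists a0. split; [exact Ha0 | split; [apply LambdaK1_eq_min; assumption |]].
  pose proof (Hmin a1 Ha1). lra.
Qed.

(* Near-optimal lengths: the first eigenvalue forces [a = O(k^(2/3))], the
   [k]-th one forces [a^2 >= (k-1)^2 PI^2 / (3 A asym_rate k^(2/3))]. *)
Lemma near_minimizer_bounds (k : nat) (a : R) : (2 <= k)%nat -> 1 <= a ->
  Lam_fun A al k a <= 3 * asym_rate A al * rpow (INR k) (2/3) ->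
  minimizer_lo A al * rpow (INR k) (2/3) <= a /\ a <= minimizer_hi A al * rpow (INR k) (2/3).
Proof.
  intros Hk Ha Hle. pose proof (sqrt_A_pos A HA) as Hs. pose proof PI_RGT_0.
  assert (HP2 : 0 < PI ^ 2) by (apply pow_lt; lra).
  destruct (rpow_two_thirds_INR k ltac:(lia)) as [Ht [Ht3 _]].
  set (t := rpow (INR k) (2/3)) in *.
  pose proof asym_rate_pos as HR. set (R := asym_rate A al) in *.
  assert (Hk2 : 2 <= INR k) by (apply le_INR in Hk; exact Hk).
  assert (Hrate : 0 < ev1_rate A al (sqrt A)) by (apply ev1_rate_pos; lra).
  rewrite Lam_fun_freq in Hle by (lia || lra).
  pose proof (ev1_rate_mul_le A al HA Hal k a ltac:(lia) Ha) as Hlin.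
  assert (Hsa : sqrt A / a <= sqrt A).
  { apply Rle_div_l; [lra |]. rewrite <- (Rmult_1_r (sqrt A)) at 1. apply Rmult_le_compat_l; lra. }
  pose proof (Lam_freq_ge A al HA Hal k a (sqrt A) ltac:(lia) ltac:(lra) Hsa) as Hge.
  split.
  - unfold minimizer_lo. fold R. set (c := sqrt (PI ^ 2 / (12 * A * R))).
    assert (Hc2 : c * c = PI ^ 2 / (12 * A * R))
      by (apply sqrt_sqrt; left; apply Rdiv_lt_0_compat; nra).
    assert (Hc : 0 <= c) by apply sqrt_pos.
    destruct (Rle_lt_dec (c * t) a) as [Hca | Hac]; [exact Hca | exfalso].
    assert (Hsq : a ^ 2 < (c * t) ^ 2) by (apply Rsqr_incrst_1 in Hac; unfold Rsqr in Hac; nra).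
    assert (Hkk : (INR k - 1) ^ 2 * PI ^ 2 / A / a ^ 2 <= 3 * R * t) by nra.
    apply (Rmult_le_compat_r (A * a ^ 2)) in Hkk; [| nra].
    replace ((INR k - 1) ^ 2 * PI ^ 2 / A / a ^ 2 * (A * a ^ 2)) with ((INR k - 1) ^ 2 * PI ^ 2)
      in Hkk by (field; lra).
    assert (Hmax : 3 * R * t * (A * a ^ 2) < PI ^ 2 * INR k ^ 2 / 4).
    { replace (PI ^ 2 * INR k ^ 2 / 4) with (3 * R * A * (c * c) * t ^ 3)
        by (rewrite Hc2, Ht3; field; lra).
      replace (3 * R * A * (c * c) * t ^ 3) with (3 * R * t * (A * (c * t) ^ 2)) by ring.
      apply Rmult_lt_compat_l; [nra |]. apply Rmult_lt_compat_l; assumption. }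
    assert ((INR k / 2) ^ 2 <= (INR k - 1) ^ 2) by (apply pow_incr; lra).
    nra.
  - unfold minimizer_hi. fold R. apply (Rmult_le_reg_l (ev1_rate A al (sqrt A))); [exact Hrate |].
    replace (ev1_rate A al (sqrt A) * (3 * R / ev1_rate A al (sqrt A) * t)) with (3 * R * t)
      by (field; lra).
    lra.
Qed.

End Asymptotics.

(* The AM-GM lower bound of [Lam_fun] at a length [a >= minimizer_lo * k^(2/3)],
   divided by [k^(2/3)]. *)
Definition rate_lower_seq (A al : R) (k : nat) : R :=
  3 * Rpower ((1 - / INR k) ^ 2 * (PI ^ 2 / (4 * A))
              * ev1_rate A al (sqrt A / (minimizer_lo A al * rpow (INR k) (2/3))) ^ 2) (1/3).

Lemma is_lim_seq_inv_INR : is_lim_seq (fun k => / INR k) 0.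
Proof.
  replace (Finite 0) with (Rbar_inv p_infty) by reflexivity.
  apply is_lim_seq_inv; [apply is_lim_seq_INR | discriminate].
Qed.

Lemma is_lim_seq_inv_rpow_two_thirds : is_lim_seq (fun k => / rpow (INR k) (2/3)) 0.
Proof.
  apply (is_lim_seq_le_le_loc (fun _ => 0) _ (fun k => sqrt (/ INR k)));
    [| apply is_lim_seq_const |].
  - exists 1%nat. intros k Hk.
    destruct (rpow_two_thirds_INR k Hk) as [Ht [_ Ht2]].
    assert (Hk1 : 1 <= INR k) by (apply (le_INR 1); exact Hk).
    split; [left; apply Rinv_0_lt_compat, Ht |].
    rewrite <- (sqrt_pow2 (/ rpow (INR k) (2/3))) by (left; apply Rinv_0_lt_compat, Ht).
    apply sqrt_le_1_alt. rewrite pow_inv. apply Rinv_le_contravar; lra.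
  - rewrite <- sqrt_0. apply (is_lim_seq_continuous sqrt).
    + apply continuity_pt_sqrt. lra.
    + apply is_lim_seq_inv_INR.
Qed.

Section Limit.

Variables A al : R.
Hypothesis HA : 0 < A.
Hypothesis Hal : 0 < al.

Lemma minimizer_lo_pos : 0 < minimizer_lo A al.
Proof.
  pose proof PI_RGT_0. pose proof (asym_rate_pos A al HA Hal).
  unfold minimizer_lo. apply sqrt_lt_R0, Rdiv_lt_0_compat; [apply pow_lt |]; nra.
Qed.

Lemma minimizer_hi_pos : 0 < minimizer_hi A al.
Proof.
  pose proof (asym_rate_pos A al HA Hal). pose proof (sqrt_A_pos A HA).
  unfold minimizer_hi. apply Rdiv_lt_0_compat; [lra | apply ev1_rate_pos; lra].
Qed.

Lemma rate_lower_seq_le (k : nat) (a : R) : (2 <= k)%nat -> 1 <= a ->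
  minimizer_lo A al * rpow (INR k) (2/3) <= a ->
  rate_lower_seq A al k <= Lam_fun A al k a / rpow (INR k) (2/3).
Proof.
  intros Hk Ha Hlo. pose proof (sqrt_A_pos A HA) as Hs. pose proof minimizer_lo_pos as Hc.
  destruct (rpow_two_thirds_INR k ltac:(lia)) as [Ht [Ht3 _]].
  set (t := rpow (INR k) (2/3)) in *.
  assert (Hk2 : 2 <= INR k) by (apply le_INR in Hk; exact Hk).
  set (eta := sqrt A / (minimizer_lo A al * t)).
  assert (Heta : 0 <= eta)
    by (left; apply Rdiv_lt_0_compat; [| apply Rmult_lt_0_compat]; assumption).
  assert (Hsa : sqrt A / a <= eta).
  { apply Rmult_le_compat_l; [lra |]. apply Rinv_le_contravar; [nra | exact Hlo]. }
  set (X := (1 - / INR k) ^ 2 * (PI ^ 2 / (4 * A)) * ev1_rate A al eta ^ 2).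
  assert (HX : 0 < X).
  { pose proof (ev1_rate_pos A al HA Hal eta Heta). pose proof PI_RGT_0.
    assert (0 < 1 - / INR k) by (assert (/ INR k <= / 2) by (apply Rinv_le_contravar; lra); lra).
    assert (0 < PI ^ 2) by (apply pow_lt; lra).
    unfold X. apply Rmult_lt_0_compat; [apply Rmult_lt_0_compat |];
      [apply pow_lt; lra | apply Rdiv_lt_0_compat; lra | apply pow_lt; lra]. }
  assert (Hamgm : 3 * (t * Rpower X (1/3)) <= Lam_fun A al k a).
  { rewrite Lam_fun_freq by (assumption || lia || lra).
    apply (Lam_freq_ge_amgm A al HA Hal k a eta); try assumption; try lia; try lra.
    - left. apply Rmult_lt_0_compat; [exact Ht | apply Rpower_pos].
    - right. rewrite Rpow_mult_distr, Ht3, Rpower_one_third_cube by exact HX.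
      unfold X. field. lra. }
  unfold rate_lower_seq. fold t eta X.
  apply (Rmult_le_reg_r t); [exact Ht |].
  replace (Lam_fun A al k a / t * t) with (Lam_fun A al k a) by (field; lra). lra.
Qed.

Lemma is_lim_rate_lower_seq : is_lim_seq (rate_lower_seq A al) (3 * asym_rate A al).
Proof.
  pose proof (sqrt_A_pos A HA) as Hs. pose proof PI_RGT_0. pose proof minimizer_lo_pos.
  assert (HP2 : 0 < PI ^ 2) by (apply pow_lt; lra).
  set (L := (1 - 0) ^ 2 * (PI ^ 2 / (4 * A)) * ev1_rate A al 0 ^ 2).
  assert (HL : L = (PI * al / A) ^ 2).
  { unfold L, ev1_rate. set (s := sqrt A) in *.
    replace A with (s * s) by (apply sqrt_sqrt; lra). field. lra. }
  assert (Hpos : 0 < PI * al / A) by (apply Rdiv_lt_0_compat; nra).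
  assert (Hrate : 3 * asym_rate A al = 3 * Rpower L (1/3)).
  { unfold asym_rate. rewrite HL, rpow_Rpower, <- (Rpower_pow 2 _ Hpos), Rpower_mult by exact Hpos.
    do 2 f_equal. simpl. field. }
  rewrite Hrate. unfold rate_lower_seq.
  apply (is_lim_seq_continuous (fun x => 3 * Rpower x (1/3))).
  { apply derivable_continuous_pt. exists (3 * (1/3 * Rpower L (1/3 - 1))).
    apply derivable_pt_lim_scal, derivable_pt_lim_power. rewrite HL. apply pow_lt, Hpos. }
  apply is_lim_seq_mult'; [apply is_lim_seq_mult'; [| apply is_lim_seq_const] |].
  - apply (is_lim_seq_continuous (fun x => (1 - x) ^ 2)); [| apply is_lim_seq_inv_INR].
    apply (is_derive_continuity_pt _ _ (- 2 * (1 - 0))). auto_derive; [auto | ring].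
  - apply (is_lim_seq_continuous (fun eta => ev1_rate A al eta ^ 2)).
    + apply (is_derive_continuity_pt _ _
        (2 * ev1_rate A al 0 * (- 2 * PI ^ 2 * al * (sqrt A * (2 * al)) / (sqrt A * PI ^ 2) ^ 2))).
      unfold ev1_rate. auto_derive; [nra | field; nra].
    + replace 0 with (sqrt A / minimizer_lo A al * 0) by ring.
      apply (is_lim_seq_ext (fun k => sqrt A / minimizer_lo A al * / rpow (INR k) (2/3))).
      * intros k. destruct (Req_dec (rpow (INR k) (2/3)) 0) as [-> | Hne].
        -- unfold Rdiv. rewrite Rmult_0_r, Rinv_0. ring.
        -- field. split; lra.
      * apply is_lim_seq_mult'; [apply is_lim_seq_const | apply is_lim_seq_inv_rpow_two_thirds].
Qed.

Lemma is_lim_LambdaK1_rate :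
  is_lim_seq (fun k => real (LambdaK1 A al k) / rpow (INR k) (2/3)) (3 * asym_rate A al).
Proof.
  destruct (balance_condition_eventually A al HA) as [K [HK Hcond]].
  apply (is_lim_seq_le_le_loc (rate_lower_seq A al) _ (fun _ => 3 * asym_rate A al));
    [| apply is_lim_rate_lower_seq | apply is_lim_seq_const].
  exists K. intros k Hk.
  destruct (LambdaK1_minimizer A al HA Hal k ltac:(lia) (Hcond k Hk)) as [a [Ha [-> Hle]]].
  destruct (near_minimizer_bounds A al HA Hal k a ltac:(lia) Ha Hle) as [Hlo _].
  destruct (rpow_two_thirds_INR k ltac:(lia)) as [Ht _].
  simpl. split; [apply rate_lower_seq_le; [lia | assumption | assumption] |].
  apply (Rmult_le_reg_r (rpow (INR k) (2/3))); [exact Ht |].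
  replace (Lam_fun A al k a / rpow (INR k) (2/3) * rpow (INR k) (2/3)) with (Lam_fun A al k a)
    by (field; lra).
  exact Hle.
Qed.

End Limit.

Theorem lemma6p1 (A alpha : R) (hA : 0 < A) (halpha : 0 < alpha) :
  (* lower bound *)
  (forall k : nat, (2 <= k)%nat ->
     Rbar_le
       (Finite (3 * PI ^ 2 * rpow alpha (2/3)
                / (rpow (PI ^ 2 + 2 * sqrt A * alpha) (2/3) * rpow A (2/3))
                * rpow (INR k - 2) (2/3)))
       (LambdaK1 A alpha k)) /\
  (* upper bound *)
  (forall k : nat, (2 <= k)%nat ->
     alpha <= PI ^ 2 / sqrt A * INR k ^ 2 ->
     Rbar_le (LambdaK1 A alpha k)
             (Finite (3 * rpow (PI * alpha / A) (2/3) * rpow (INR k) (2/3)))) /\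
  (* the infimum is attained *)
  (forall k : nat, (2 <= k)%nat ->
     exists a, 1 <= a /\ LambdaK1 A alpha k = Finite (Lam_fun A alpha k a)) /\
  (* minimizers of order k^{2/3} for large k *)
  (exists c c' : R, 0 < c /\ c <= c' /\
     exists K : nat, forall k : nat, (2 <= k)%nat -> (K <= k)%nat ->
       exists a, 1 <= a /\ LambdaK1 A alpha k = Finite (Lam_fun A alpha k a) /\
         c * rpow (INR k) (2/3) <= a /\ a <= c' * rpow (INR k) (2/3)) /\
  (* asymptotics *)
  is_lim_seq (fun k : nat => real (LambdaK1 A alpha k) / rpow (INR k) (2/3))
             (Finite (3 * rpow (PI * alpha / A) (2/3))).
Proof.
  split; [intros k Hk; apply LambdaK1_lower_bound; assumption |].
  split; [intros k Hk Hcond; apply (LambdaK1_upper_bound A alpha hA halpha k ltac:(lia) Hcond) |].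
  split.
  { intros k Hk. destruct (Lam_fun_attains_min A alpha hA halpha k ltac:(lia)) as [a [Ha Hmin]].
    exists a. split; [exact Ha | apply LambdaK1_eq_min; assumption]. }
  split; [| apply is_lim_LambdaK1_rate; assumption].
  pose proof (minimizer_lo_pos A alpha hA halpha). pose proof (minimizer_hi_pos A alpha hA halpha).
  exists (Rmin (minimizer_lo A alpha) (minimizer_hi A alpha)), (minimizer_hi A alpha).
  split; [apply Rmin_pos; assumption | split; [apply Rmin_r |]].
  destruct (balance_condition_eventually A alpha hA) as [K [_ Hcond]].
  exists K. intros k Hk HKk.
  destruct (LambdaK1_minimizer A alpha hA halpha k ltac:(lia) (Hcond k HKk)) as [a [Ha [Heq Hle]]].
  destruct (near_minimizer_bounds A alpha hA halpha k a Hk Ha Hle) as [Hlo Hhi].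
  destruct (rpow_two_thirds_INR k ltac:(lia)) as [Ht _].
  exists a. split; [exact Ha | split; [exact Heq | split; [| exact Hhi]]].
  eapply Rle_trans; [| exact Hlo]. apply Rmult_le_compat_r; [lra | apply Rmin_l].
Qed.
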